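(* Let $k\ge1$ and $n\ge k$ be integers, $m\ge2$ an even integer, and $\mathbf{a}=(a_1,\dots,a_k)\in\mathbb{R}^k$. Then for all $x$, \[ m^{k-n}\left(-\frac12\right)^{k}\frac{n!}{(n-k)!}\Big(\prod_{i=1}^{k}a_i\Big)E_{n-k}^{(k)}(mx\mid\mathbf{a})=\sum_{l_1,\dots,l_k=0}^{m-1}(-1)^{l_1+\dots+l_k}B_n^{(k)}\Big(x+\frac1m\sum_{i=1}^{k}a_il_i\,\Big|\,\mathbf{a}\Big). \]
   Context: The Nörlund polynomials are defined by $\sum_{n\ge0}B_n^{(k)}(x\mid\mathbf{a})\frac{t^n}{n!}=e^{xt}\prod_{j=1}^{k}\frac{a_jt}{e^{a_jt}-1}$, and the higher-order Euler polynomials with parameters by $\sum_{n\ge0}E_n^{(k)}(x\mid\mathbf{a})\frac{t^n}{n!}=e^{xt}\prod_{j=1}^{k}\frac{2}{e^{a_jt}+1}$ (the paper writes $E^{(k)}_{n-k}(mx)$, meaning these polynomials with the same parameter vector $\mathbf{a}$). *)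

(* Exponential generating functions are handled formally:
   a (formal) power series  sum_n f n * t^n / n!  is represented by its
   coefficient sequence  f : nat -> R. *)
From HB Require Import structures.
From mathcomp Require Import all_boot all_order all_algebra.
Set Implicit Arguments. Unset Strict Implicit. Unset Printing Implicit Defensive.
Import Order.TTheory GRing.Theory Num.Theory.
Local Open Scope ring_scope.

Section EGF.
Variable R : fieldType.

Definition egf_one : nat -> R := fun n => if n == 0%N then 1 else 0.

(* e^{c t} = sum c^n t^n/n! *)
Definition egf_exp (c : R) : nat -> R := fun n => c ^+ n.

Definition egf_mul (f g : nat -> R) : nat -> R :=
  fun n => \sum_(j < n.+1) ('C(n, j))%:R * f j * g (n - j)%N.

(* substitution t |-> c t *)
Definition egf_scale (c : R) (f : nat -> R) : nat -> R := fun n => c ^+ n * f n.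

(* multiplicative inverse of an EGF (assuming f 0 <> 0), computed by the
   recursion coming from  egf_mul f (egf_inv f) = egf_one *)
Fixpoint egf_inv_seq (f : nat -> R) (n : nat) : seq R :=
  match n with
  | 0%N => [:: (f 0%N)^-1]
  | n'.+1 =>
      let s := egf_inv_seq f n' in
      rcons s (- (f 0%N)^-1 *
               \sum_(j < n'.+1) ('C(n'.+1, j))%:R * f (n'.+1 - j)%N * nth 0 s j)
  end.

Definition egf_inv (f : nat -> R) : nat -> R := fun n => nth 0 (egf_inv_seq f n) n.

(* (e^t - 1)/t = sum_n t^n/(n+1)! = sum_n (1/(n+1)) t^n/n! *)
Definition expm1_over_t : nat -> R := fun n => (n.+1)%:R^-1.

(* (e^t + 1)/2 = 1 + sum_{n>=1} (1/2) t^n/n! *)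
Definition exp_plus1_half : nat -> R := fun n => if n == 0%N then 1 else 2^-1.

(* a t/(e^{a t} - 1) *)
Definition bern_factor (a : R) : nat -> R := egf_scale a (egf_inv expm1_over_t).

(* 2/(e^{a t} + 1) *)
Definition euler_factor (a : R) : nat -> R := egf_scale a (egf_inv exp_plus1_half).

(* Nörlund polynomial B_n^{(k)}(x | a):
   sum_n B_n^{(k)}(x|a) t^n/n! = e^{xt} prod_{j=1}^k a_j t/(e^{a_j t} - 1) *)
Definition norlund (k : nat) (a : 'I_k -> R) (n : nat) (x : R) : R :=
  egf_mul (egf_exp x) (\big[egf_mul/egf_one]_(j < k) bern_factor (a j)) n.

(* higher-order Euler polynomial E_n^{(k)}(x | a):
   sum_n E_n^{(k)}(x|a) t^n/n! = e^{xt} prod_{j=1}^k 2/(e^{a_j t} + 1) *)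
Definition euler_hk (k : nat) (a : 'I_k -> R) (n : nat) (x : R) : R :=
  egf_mul (egf_exp x) (\big[egf_mul/egf_one]_(j < k) euler_factor (a j)) n.

End EGF.

(* Exponential generating functions (EGFs) are coefficient sequences; to use
   polynomial algebra we send an EGF  f  to its jet  sum_{i<=N} f_i/i! t^i,
   a polynomial considered modulo t^{N+1} (this needs characteristic 0).
   The jet map turns the binomial convolution of EGFs into the truncated
   product of polynomials, and e^{(y+z)t} = e^{yt} e^{zt}.

   The heart of the proof is a one-variable identity: if m is even and
   a = m c, then, with q = e^{ct},
     sum_{l<m} (-q)^l * a t/(e^{at}-1) = (-a t/2) * 2/(e^{ct}+1),
   which follows from (sum_{l<m} (-q)^l)(1+q) = 1 - q^m = 1 - e^{at}.
   Summing the Nörlund generating functions with signs over all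
   l in {0..m-1}^k, the sum factors as e^{xt} times a product over j of
   these one-variable sums; hence it equals (-1/2)^k (prod_j a_j) t^k times
   the Euler generating function with parameters a_j/m, which is the Euler
   generating function with parameters a_j, evaluated at m x, with t
   replaced by t/m.  Comparing the coefficients of t^n gives the theorem. *)
From HB Require Import structures.
From mathcomp Require Import all_boot all_order all_algebra.
From mathcomp Require Import ring.
From Stdlib Require Import FunctionalExtensionality.
Set Implicit Arguments. Unset Strict Implicit. Unset Printing Implicit Defensive.
Import Order.TTheory GRing.Theory Num.Theory.
Local Open Scope ring_scope.

Lemma alternating_geometric (R : comPzRingType) (m : nat) (q : R) :
  (\sum_(l < m) (-1) ^+ l * q ^+ l) * (1 + q) = 1 - (-1) ^+ m * q ^+ m.
Proof.
elim: m => [|m IH]; first by rewrite big_ord0 mul0r !expr0 mul1r subrr.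
by rewrite big_ord_recr /= mulrDl IH !exprS; ring.
Qed.

Section EgfAlgebra.
Variable R : fieldType.
Implicit Types (f g : nat -> R) (c y z : R).

Lemma egf_scaleM c f g :
  egf_scale c (egf_mul f g) = egf_mul (egf_scale c f) (egf_scale c g).
Proof.
apply: functional_extensionality => n; rewrite /egf_scale /egf_mul mulr_sumr.
apply: eq_bigr => j _; have hj : (j <= n)%N by rewrite -ltnS.
by rewrite -{1}(subnKC hj) exprD; ring.
Qed.

Lemma egf_scale1 c : egf_scale c (egf_one R) = egf_one R.
Proof.
apply: functional_extensionality => n; rewrite /egf_scale /egf_one.
by case: n => [|n] /=; rewrite ?expr0 ?mulr1 ?mulr0.
Qed.

Lemma egf_scale_prod c k (F : 'I_k -> nat -> R) :
  egf_scale c (\big[@egf_mul R/egf_one R]_(j < k) F j)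
  = \big[@egf_mul R/egf_one R]_(j < k) egf_scale c (F j).
Proof.
elim: k F => [|k IH] F; first by rewrite !big_ord0 egf_scale1.
by rewrite !big_ord_recl egf_scaleM IH.
Qed.

Lemma egf_scale_exp c y : egf_scale c (egf_exp y) = egf_exp (c * y).
Proof. by apply: functional_extensionality => n; rewrite /egf_scale /egf_exp exprMn. Qed.

Lemma egf_scale_scale c y f : egf_scale c (egf_scale y f) = egf_scale (c * y) f.
Proof. by apply: functional_extensionality => n; rewrite /egf_scale exprMn mulrA. Qed.

(* e^{(y+z)t} = e^{yt} e^{zt}: the binomial theorem. *)
Lemma egf_expD y z : egf_exp (y + z) = egf_mul (egf_exp y) (egf_exp z).
Proof.
apply: functional_extensionality => n; rewrite /egf_exp /egf_mul addrC exprDn.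
by apply: eq_bigr => j _; rewrite -mulr_natl; ring.
Qed.

Lemma egf_exp0 : egf_exp 0 = egf_one R.
Proof. by apply: functional_extensionality => -[|n]; rewrite /egf_exp /egf_one expr0n. Qed.

Lemma size_egf_inv_seq f n : size (egf_inv_seq f n) = n.+1.
Proof. by elim: n => [|n IH] //=; rewrite size_rcons IH. Qed.

Lemma nth_egf_inv_seq f n j : (j <= n)%N -> nth 0 (egf_inv_seq f n) j = egf_inv f j.
Proof.
elim: n j => [|n IH] j hj; first by case: j hj.
rewrite leq_eqVlt in hj; case/orP: hj => [/eqP ->|hj]; first by [].
by rewrite /= nth_rcons size_egf_inv_seq hj IH.
Qed.

Lemma egf_mulVf f : f 0%N != 0 -> egf_mul (egf_inv f) f = egf_one R.
Proof.
move=> hf; apply: functional_extensionality => n; rewrite /egf_mul /egf_one.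
case: n => [|n]; first by rewrite big_ord1 /= bin0 mul1r /egf_inv /= mulVf.
rewrite big_ord_recr /= binn mul1r subnn.
have -> : egf_inv f n.+1 = - (f 0%N)^-1 *
   \sum_(j < n.+1) ('C(n.+1, j))%:R * f (n.+1 - j)%N * egf_inv f j.
  rewrite {1}/egf_inv /= nth_rcons size_egf_inv_seq ltnn eqxx; congr (_ * _).
  by apply: eq_bigr => j _; rewrite nth_egf_inv_seq // -ltnS.
rewrite mulrAC mulNr mulVf // mulN1r.
under eq_bigr => j _ do rewrite mulrAC.
by rewrite subrr.
Qed.

Lemma euler_hk_scale k (a : 'I_k -> R) s n y :
  euler_hk (fun j => s * a j) n (s * y) = s ^+ n * euler_hk a n y.
Proof.
rewrite /euler_hk -/(egf_scale s _ n) egf_scaleM egf_scale_exp egf_scale_prod.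
by congr (egf_mul _ _ n); apply: eq_bigr => j _; rewrite /euler_factor egf_scale_scale.
Qed.

End EgfAlgebra.

Section Truncation.
Variable R : numFieldType.
Variable N : nat.
Implicit Types (f g : nat -> R) (c y z : R) (p q : {poly R}).

Definition trunc p : {poly R} := p %% 'X^(N.+1).

Definition egf_poly f : {poly R} := \poly_(i < N.+1) (f i / (i`!)%:R).

Lemma coef_trunc p i : (trunc p)`_i = if (i < N.+1)%N then p`_i else 0.
Proof. by rewrite /trunc -Pdiv.IdomainMonic.take_poly_modp coef_take_poly. Qed.

Lemma trunc_egf_poly f : trunc (egf_poly f) = egf_poly f.
Proof. by rewrite /trunc modp_small // size_polyXn ltnS size_poly. Qed.

Lemma truncMl p q : trunc (trunc p * q) = trunc (p * q).
Proof. by rewrite /trunc mulrC modp_mul mulrC. Qed.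

Lemma truncMr p q : trunc (p * trunc q) = trunc (p * q).
Proof. by rewrite /trunc modp_mul. Qed.

Lemma truncD p q : trunc (p + q) = trunc p + trunc q.
Proof. by rewrite /trunc modpD. Qed.

Lemma truncZ c p : trunc (c *: p) = c *: trunc p.
Proof. by rewrite /trunc modpZl. Qed.

Lemma truncN p : trunc (- p) = - trunc p.
Proof. by rewrite -scaleN1r truncZ scaleN1r. Qed.

Lemma trunc_id p : trunc (trunc p) = trunc p.
Proof. by rewrite /trunc modp_id. Qed.

Lemma trunc1 : trunc 1 = 1.
Proof. by rewrite /trunc modp_small // size_polyXn size_poly1. Qed.

Lemma trunc_sum (I : Type) (r : seq I) (F : I -> {poly R}) :
  trunc (\sum_(i <- r) F i) = \sum_(i <- r) trunc (F i).
Proof.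
elim: r => [|i r IH]; first by rewrite !big_nil /trunc mod0p.
by rewrite !big_cons truncD IH.
Qed.

Lemma trunc_prod k (P Q : 'I_k -> {poly R}) :
  (forall j, trunc (P j) = trunc (Q j)) ->
  trunc (\prod_j P j) = trunc (\prod_j Q j).
Proof.
elim: k P Q => [|k IH] P Q h; first by rewrite !big_ord0.
rewrite !big_ord_recl -truncMl h truncMl -truncMr.
by rewrite (IH _ (fun j => Q (lift ord0 j))) ?truncMr.
Qed.

Lemma fact_neq0 i : (i`!)%:R != 0 :> R.
Proof. by rewrite pnatr_eq0 -lt0n fact_gt0. Qed.

Lemma egf_polyM f g : egf_poly (egf_mul f g) = trunc (egf_poly f * egf_poly g).
Proof.
apply/polyP => i; rewrite coef_trunc coef_poly coefM.
case: ltnP => hi //; rewrite /egf_mul mulr_suml; apply: eq_bigr => j _.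
have hj : (j <= i)%N by rewrite -ltnS.
rewrite !coef_poly (leq_ltn_trans hj hi) (leq_ltn_trans (leq_subr j i) hi).
have := bin_fact hj => /(congr1 (fun n => n%:R : R)); rewrite !natrM => <-.
have h1 := fact_neq0 j; have h2 := fact_neq0 (i - j).
have h3 : ('C(i, j))%:R != 0 :> R by rewrite pnatr_eq0 -lt0n bin_gt0.
by field; rewrite h1 h2 h3.
Qed.

Lemma egf_poly1 : egf_poly (egf_one R) = 1.
Proof.
apply/polyP => i; rewrite coef_poly coef1 /egf_one.
by case: i => [|i] //=; rewrite ?mul1r ?invr1 ?mul0r //; case: ifP.
Qed.

Lemma egf_poly_prod k (F : 'I_k -> nat -> R) :
  egf_poly (\big[@egf_mul R/egf_one R]_(j < k) F j)
  = trunc (\prod_(j < k) egf_poly (F j)).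
Proof.
elim: k F => [|k IH] F; first by rewrite !big_ord0 egf_poly1 trunc1.
by rewrite !big_ord_recl egf_polyM IH truncMr.
Qed.

Lemma egf_poly_lincomb (I : Type) (r : seq I) (w : I -> R) (F : I -> nat -> R) :
  egf_poly (fun n => \sum_(i <- r) w i * F i n) = \sum_(i <- r) w i *: egf_poly (F i).
Proof.
apply/polyP => j; rewrite coef_poly coef_sum.
case: ltnP => hj.
  by rewrite mulr_suml; apply: eq_bigr => i _; rewrite coefZ coef_poly hj mulrA.
by rewrite big1 // => i _; rewrite coefZ coef_poly ltnNge hj /= mulr0.
Qed.

Definition exp_poly c : {poly R} := egf_poly (egf_exp c).

Lemma trunc_exp_polyD y z : trunc (exp_poly (y + z)) = trunc (exp_poly y * exp_poly z).
Proof. by rewrite /exp_poly egf_expD egf_polyM trunc_id. Qed.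

Lemma trunc_exp_poly_sum k (y : 'I_k -> R) :
  trunc (exp_poly (\sum_j y j)) = trunc (\prod_j exp_poly (y j)).
Proof.
elim: k y => [|k IH] y; first by rewrite !big_ord0 /exp_poly egf_exp0 egf_poly1.
by rewrite !big_ord_recl trunc_exp_polyD -truncMr IH truncMr.
Qed.

Lemma trunc_exp_poly_natmul (l : nat) c :
  trunc (exp_poly (l%:R * c)) = trunc (exp_poly c ^+ l).
Proof.
have := trunc_exp_poly_sum (fun _ : 'I_l => c).
by rewrite sumr_const prodr_const card_ord mulr_natl.
Qed.

End Truncation.

Section OneParameter.
Variable R : numFieldType.
Variable N : nat.
Implicit Types (a c : R) (p : {poly R}).
Local Notation trunc := (trunc N).
Local Notation egf_poly := (egf_poly N).
Local Notation exp_poly := (exp_poly N).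

Definition bern_poly a : {poly R} := egf_poly (bern_factor a).
Definition expm1_poly a : {poly R} := egf_poly (egf_scale a (@expm1_over_t R)).
Definition exp_plus1_poly c : {poly R} := egf_poly (egf_scale c (@exp_plus1_half R)).
Definition euler_poly c : {poly R} := egf_poly (euler_factor c).

Lemma trunc_expm1_bern a : trunc (expm1_poly a * bern_poly a) = 1.
Proof.
rewrite mulrC -egf_polyM /bern_factor -egf_scaleM egf_mulVf ?egf_scale1 ?egf_poly1 //.
by rewrite /expm1_over_t invr1 oner_neq0.
Qed.

Lemma trunc_exp_plus1_euler c : trunc (exp_plus1_poly c * euler_poly c) = 1.
Proof.
rewrite mulrC -egf_polyM /euler_factor -egf_scaleM egf_mulVf ?egf_scale1 ?egf_poly1 //.
by rewrite /exp_plus1_half /= oner_neq0.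
Qed.

Lemma trunc_X_expm1 a : trunc ('X * (a%:P * expm1_poly a)) = exp_poly a - 1.
Proof.
apply/polyP => i; rewrite coef_trunc coefXM coefB coef1 /exp_poly coef_poly /egf_exp.
case: i => [|i] /=; first by rewrite expr0 fact0 invr1 mulr1 subrr.
case: ltnP => hi; last by rewrite subr0.
rewrite coefCM coef_poly (ltn_trans (ltnSn i) hi) /egf_scale /expm1_over_t subr0.
rewrite factS natrM exprS.
have h1 := fact_neq0 R i; have h2 : (i.+1)%:R != 0 :> R by rewrite pnatr_eq0.
by field; rewrite h1 nat1r h2.
Qed.

Lemma exp_plus1_polyE c : exp_plus1_poly c = (2^-1)%:P * (1 + exp_poly c).
Proof.
apply/polyP => i; rewrite coefCM coefD coef1 /exp_poly /exp_plus1_poly !coef_poly.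
rewrite /egf_exp /egf_scale /exp_plus1_half.
have h2 : (2:R) != 0 by rewrite pnatr_eq0.
case: i => [|i] /=; first by rewrite expr0 fact0 mul1r; field.
have hf := fact_neq0 R i.+1.
by case: ifP => _; [field; rewrite ?hf ?h2 | rewrite add0r mulr0].
Qed.

Lemma alternating_bern_sum m a c : ~~ odd m -> m%:R * c = a ->
  trunc (\sum_(l < m) (-1) ^+ l *: (exp_poly c ^+ l * bern_poly a))
  = trunc ((- 2^-1 * a) *: ('X * euler_poly c)).
Proof.
move=> hm hc; set q := exp_poly c; set S := \sum_(l < m) (-1) ^+ l * q ^+ l.
have -> : \sum_(l < m) (-1) ^+ l *: (q ^+ l * bern_poly a) = S * bern_poly a.
  rewrite /S mulr_suml; apply: eq_bigr => l _.
  by rewrite -mul_polyC rmorphXn rmorphN1 mulrA.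
have hS : S * (1 + q) = 1 - q ^+ m.
  by rewrite alternating_geometric -signr_odd (negbTE hm) expr0 mul1r.
have h1qm : trunc (1 - q ^+ m) = trunc (- (a%:P * 'X * expm1_poly a)).
  have hqm : trunc (q ^+ m) = exp_poly a.
    by rewrite /q -trunc_exp_poly_natmul hc /exp_poly trunc_egf_poly.
  by rewrite truncD truncN trunc1 hqm truncN -mulrA mulrCA trunc_X_expm1 opprB.
transitivity (trunc (S * bern_poly a * (exp_plus1_poly c * euler_poly c))).
  by rewrite -[RHS]truncMr trunc_exp_plus1_euler mulr1.
rewrite exp_plus1_polyE -/q.
have -> : S * bern_poly a * ((2^-1)%:P * (1 + q) * euler_poly c)
          = (S * (1 + q)) * ((2^-1)%:P * bern_poly a * euler_poly c) by ring.
rewrite hS -truncMl h1qm truncMl.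
have -> : - (a%:P * 'X * expm1_poly a) * ((2^-1)%:P * bern_poly a * euler_poly c)
          = ((- 2^-1 * a)%:P * ('X * euler_poly c)) * (expm1_poly a * bern_poly a).
  by rewrite polyCM polyCN; ring.
by rewrite -truncMr trunc_expm1_bern mulr1 mul_polyC.
Qed.

End OneParameter.

Section AlternatingSum.
Variable R : numFieldType.
Variables k m : nat.
Variable a : 'I_k -> R.
Variable x : R.

Definition norlund_shift (l : {ffun 'I_k -> 'I_m}) : R :=
  x + m%:R^-1 * \sum_(i < k) a i * (l i : nat)%:R.

Definition alt_norlund_sum (n : nat) : R :=
  \sum_(l : {ffun 'I_k -> 'I_m})
    (-1) ^+ (\sum_(i < k) (l i : nat))%N * norlund a n (norlund_shift l).

Lemma egf_poly_norlund_shift N l :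
  egf_poly N (fun n => norlund a n (norlund_shift l))
  = trunc N (exp_poly N x *
      \prod_j (exp_poly N (m%:R^-1 * a j) ^+ l j * bern_poly N (a j))).
Proof.
have shiftE : trunc N (exp_poly N (norlund_shift l))
    = trunc N (exp_poly N x * \prod_j exp_poly N (m%:R^-1 * a j) ^+ l j).
  rewrite /norlund_shift.
  have -> : m%:R^-1 * \sum_(i < k) a i * (l i : nat)%:R
            = \sum_i (l i : nat)%:R * (m%:R^-1 * a i).
    by rewrite mulr_sumr; apply: eq_bigr => i _; ring.
  rewrite trunc_exp_polyD -truncMr trunc_exp_poly_sum.
  rewrite (trunc_prod (Q := fun j => exp_poly N (m%:R^-1 * a j) ^+ l j)) ?truncMr //.
  by move=> j; rewrite trunc_exp_poly_natmul.
rewrite /norlund -/(egf_mul _ _) egf_polyM egf_poly_prod truncMr -truncMl shiftE.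
by rewrite truncMl big_split /= mulrA.
Qed.

Lemma egf_poly_alt_norlund_sum N : (0 < m)%N -> ~~ odd m ->
  egf_poly N alt_norlund_sum
  = ((- 2^-1) ^+ k * \prod_(i < k) a i) *:
      trunc N ('X^k * egf_poly N (fun n => euler_hk (fun j => m%:R^-1 * a j) n x)).
Proof.
move=> m_gt0 m_even.
have hm0 : m%:R != 0 :> R by rewrite pnatr_eq0 -lt0n.
set c := fun j => m%:R^-1 * a j.
rewrite /alt_norlund_sum egf_poly_lincomb.
(* Distribute the sign (-1)^{l_1+...+l_k} over the factors j; the sum over
   l in {0..m-1}^k of products then becomes a product of sums over l < m. *)
under eq_bigr => l _ do rewrite egf_poly_norlund_shift -truncZ scalerAr -prodrXr -scaler_prod.
rewrite -trunc_sum -mulr_sumr.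
rewrite -(bigA_distr_bigA
  (fun (j : 'I_k) (i : 'I_m) => (-1) ^+ i *: (exp_poly N (c j) ^+ i * bern_poly N (a j)))).
rewrite -truncMr (trunc_prod (Q := fun j => (- 2^-1 * a j) *: ('X * euler_poly N (c j)))); last first.
  by move=> j; apply: alternating_bern_sum => //; rewrite /c mulrA mulfV ?mul1r.
have eulerE : egf_poly N (fun n => euler_hk c n x)
              = trunc N (exp_poly N x * \prod_j euler_poly N (c j)).
  by rewrite /euler_hk -/(egf_mul _ _) egf_polyM egf_poly_prod truncMr.
rewrite truncMr eulerE truncMr -truncZ.
rewrite scaler_prod !big_split /= !prodr_const card_ord; congr trunc.
by rewrite -scalerAr; congr (_ *: _); exact: mulrCA.
Qed.

End AlternatingSum.

Theorem mainTheorem12 (R : realFieldType) (k n m : nat)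
  (hk : (1 <= k)%N) (hnk : (k <= n)%N) (hm : (2 <= m)%N) (hmeven : ~~ odd m)
  (a : 'I_k -> R) (x : R) :
  (m%:R ^+ (n - k))^-1 * (- 2^-1) ^+ k * ((n`!)%:R / ((n - k)`!)%:R)
    * (\prod_(i < k) a i) * euler_hk a (n - k) (m%:R * x)
  = \sum_(l : {ffun 'I_k -> 'I_m})
      (-1) ^+ (\sum_(i < k) (l i : nat))%N
      * norlund a n (x + m%:R^-1 * \sum_(i < k) a i * (l i : nat)%:R).
Proof.
have m_gt0 : (0 < m)%N := ltnW hm.
have hm0 : m%:R != 0 :> R by rewrite pnatr_eq0 -lt0n.
have := congr1 (fun p : {poly R} => p`_n) (egf_poly_alt_norlund_sum a x n m_gt0 hmeven).
rewrite coefZ coef_trunc ltnSn coefXnM ltnNge hnk /= !coef_poly ltnSn ltnS leq_subr.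
have -> : euler_hk (fun j => m%:R^-1 * a j) (n - k) x
          = m%:R^-1 ^+ (n - k) * euler_hk a (n - k) (m%:R * x).
  by rewrite -euler_hk_scale mulrA mulVf ?mul1r.
move=> /(canRL (divfK (fact_neq0 R n))) coefE.
rewrite -[RHS]/(alt_norlund_sum m a x n) coefE.
have hmk : m%:R ^+ (n - k) != 0 :> R by rewrite expf_neq0.
move: (euler_hk a _ _) (\prod_(i < k) a i) => E P.
by rewrite exprVn; field; rewrite hmk fact_neq0.
Qed.
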